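(* Let $\{E_i\}_{i\in I}$ be a family of $F$-Banach spaces, each regarded as a complete bornological $F$-vector space (bounded subsets being the norm-bounded subsets). Then the direct sum $\bigoplus_{i\in I}E_i$ in the category of complete bornological $F$-vector spaces is proper.
   Context: $F$ is a field complete with respect to a non-trivial non-Archimedean absolute value, $F^{\circ}$ its unit ball, $\pi$ a pseudo-uniformiser. A bornology on an $F$-vector space $E$ is a collection of ''bounded'' subsets closed under subsets, containing singletons, closed under finite unions, under multiplication by nonzero scalars, and under $B\mapsto F^{\circ}B$. The direct sum $\bigoplus_i E_i$ of complete bornological spaces has as underlying space the algebraic direct sum, and a subset is bounded iff it is contained in a finite sum $\sum_i B_i$ of bounded subsets $B_i\subseteq E_i$. A sequence $(e_n)$ in a bornological space $E$ converges (bornologically) to $0$ if there is a bounded $B\subseteq E$ such that for every $\lambda\in F\setminus\{0\}$ there is $N$ with $e_n\in\lambda B$ for all $n\ge N$; it converges to $e$ if $(e-e_n)$ converges to $0$. A subset $C$ is (bornologically) closed if every sequence of elements of $C$ converging to some element converges to an element of $C$. $E$ is proper if its bornology has a basis of closed subsets (a basis being a family of bounded sets such that every bounded set lies in a finite union of members). *)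

From HB Require Import structures.
From mathcomp Require Import all_boot all_order all_algebra.
From mathcomp Require Import reals.
From Stdlib Require Lists.List.
Set Implicit Arguments. Unset Strict Implicit. Unset Printing Implicit Defensive.
Import Order.TTheory GRing.Theory Num.Theory.
Local Open Scope ring_scope.

Record complete_nonarch_abs (R : realType) (F : fieldType) (abs : F -> R) : Prop := {
  nabs_eq0 : forall x, abs x = 0 <-> x = 0;
  nabs_ge0 : forall x, 0 <= abs x;
  nabsM : forall x y, abs (x * y) = abs x * abs y;
  nabs_ultra : forall x y, abs (x + y) <= Num.max (abs x) (abs y);
  nabs_nontrivial : exists x, abs x <> 0 /\ abs x <> 1;
  nabs_complete : forall u : nat -> F,
    (forall eps, 0 < eps -> exists N, forall m n, (N <= m)%N -> (N <= n)%N ->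
        abs (u m - u n) < eps) ->
    exists l, forall eps, 0 < eps -> exists N, forall n, (N <= n)%N ->
        abs (u n - l) < eps
}.

Record is_banach (R : realType) (F : fieldType) (abs : F -> R) (E : lmodType F)
    (norm : E -> R) : Prop := {
  bnorm_eq0 : forall x, norm x = 0 <-> x = 0;
  bnormZ : forall (a : F) (x : E), norm (a *: x) = abs a * norm x;
  bnorm_ultra : forall x y, norm (x + y) <= Num.max (norm x) (norm y);
  bnorm_complete : forall u : nat -> E,
    (forall eps, 0 < eps -> exists N, forall m n, (N <= m)%N -> (N <= n)%N ->
        norm (u m - u n) < eps) ->
    exists l, forall eps, 0 < eps -> exists N, forall n, (N <= n)%N ->
        norm (u n - l) < eps
}.

Definition norm_bounded (R : realType) (E : Type) (norm : E -> R) (B : E -> Prop) :=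
  exists r : R, forall x, B x -> norm x <= r.

Section DirectSum.
Variables (R : realType) (F : fieldType) (I : Type) (E : I -> lmodType F)
  (norm : forall i, E i -> R).

(* Underlying space of the algebraic direct sum: finitely supported families. *)
Definition finsupp (x : forall i, E i) : Prop :=
  exists s : seq I, forall i, ~ Stdlib.Lists.List.In i s -> x i = 0.

Definition dsum := {x : forall i, E i | finsupp x}.

(* Bounded sets of the direct sum: contained in a finite sum sum_{i in J} B_i
   of bounded B_i subset E_i (embedded in the i-th summand). *)
Definition dsum_bounded (B : dsum -> Prop) : Prop :=
  exists (J : seq I) (Bs : forall i, E i -> Prop),
    (forall i, norm_bounded (@norm i) (Bs i)) /\
    forall x, B x -> forall i,
      (Stdlib.Lists.List.In i J -> Bs i (proj1_sig x i)) /\ (~ Stdlib.Lists.List.In i J -> proj1_sig x i = 0).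

Definition in_scaled (lam : F) (B : dsum -> Prop) (d : forall i, E i) : Prop :=
  exists b, B b /\ forall i, d i = lam *: proj1_sig b i.

Definition dsum_conv0 (d : nat -> forall i, E i) : Prop :=
  exists B, dsum_bounded B /\
    forall lam : F, lam <> 0 -> exists N, forall n, (N <= n)%N -> in_scaled lam B (d n).

Definition dsum_conv (s : nat -> dsum) (e : dsum) : Prop :=
  dsum_conv0 (fun n i => proj1_sig e i - proj1_sig (s n) i).

Definition dsum_closed (C : dsum -> Prop) : Prop :=
  forall s : nat -> dsum, (forall n, C (s n)) ->
    (exists e, dsum_conv s e) -> exists e, C e /\ dsum_conv s e.

Definition dsum_proper : Prop :=
  exists Basis : (dsum -> Prop) -> Prop,
    (forall A, Basis A -> dsum_bounded A /\ dsum_closed A) /\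
    forall B, dsum_bounded B ->
      exists As : seq (dsum -> Prop), (forall A, Stdlib.Lists.List.In A As -> Basis A) /\
        forall x, B x -> exists A, Stdlib.Lists.List.In A As /\ A x.

End DirectSum.

(** In a non-Archimedean Banach space the closed ball of radius r is closed
    under norm limits, since ||y|| <= max(||z||, ||y - z||).  Every bounded set
    B of the direct sum lies in a finite sum of such balls, i.e. in
    { x | x_i = 0 off a finite J and ||x_i|| <= r }.  That set is bounded, and
    it is bornologically closed: a bornologically convergent sequence converges
    in norm in every component, because its tails lie in lam * B' for a fixed
    bounded B' and scalars lam of arbitrarily small absolute value, which exist
    as the absolute value is non-trivial. *)
From HB Require Import structures.
From mathcomp Require Import all_boot all_order all_algebra.
From mathcomp Require Import reals.
From mathcomp Require Import lra.

Set Implicit Arguments.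
Unset Strict Implicit.
Unset Printing Implicit Defensive.
Import Order.TTheory GRing.Theory Num.Theory.
Local Open Scope ring_scope.

Lemma bernoulli_ineq (R : realFieldType) (h : R) n :
  0 <= h -> 1 + n%:R * h <= (1 + h) ^+ n.
Proof.
move=> h0; elim: n => [|n IH]; first by rewrite expr0 mul0r addr0.
rewrite exprS; apply: le_trans (ler_wpM2l _ IH); last by rewrite addr_ge0.
have : 0 <= h * (n%:R * h) by rewrite !mulr_ge0.
rewrite -natr1; lra.
Qed.

Lemma exists_expr_lt (R : archiRealFieldType) (a d : R) :
  0 < a -> a < 1 -> 0 < d -> exists n, a ^+ n < d.
Proof.
move=> a0 a1 d0; set h := a^-1 - 1.
have h0 : 0 < h by rewrite subr_gt0 invf_gt1.
pose n := Num.bound ((d * h)^-1); exists n.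
have n_big : (d * h)^-1 < n%:R by apply: archi_boundP; rewrite invr_ge0 ltW ?mulr_gt0.
have d_lt : d^-1 < n%:R * h by rewrite -ltr_pdivrMr // -invfM.
have := bernoulli_ineq n (ltW h0).
rewrite addrCA subrr addr0 exprVn => hB.
rewrite -ltf_pV2 ?posrE ?exprn_gt0 //; lra.
Qed.

Section NonArchimedeanAbs.
Variables (R : realType) (F : fieldType) (abs : F -> R).
Hypothesis habs : complete_nonarch_abs abs.

Lemma nabs0 : abs 0 = 0.
Proof. exact/(nabs_eq0 habs). Qed.

Lemma nabs_gt0 (x : F) : x != 0 -> 0 < abs x.
Proof.
move=> x0; rewrite lt_def (nabs_ge0 habs) andbT.
by apply/eqP => /(nabs_eq0 habs)/eqP; apply/negP.
Qed.

Lemma nabs1 : abs 1 = 1.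
Proof.
have a1_gt0 : 0 < abs 1 by rewrite nabs_gt0 ?oner_eq0.
by apply: (mulfI (lt0r_neq0 a1_gt0)); rewrite -(nabsM habs) !mulr1.
Qed.

Lemma nabsX (x : F) n : abs (x ^+ n) = abs x ^+ n.
Proof. by elim: n => [|n IH]; rewrite ?expr0 ?nabs1 // !exprS (nabsM habs) IH. Qed.

Lemma nabsV (x : F) : x != 0 -> abs x^-1 = (abs x)^-1.
Proof.
move=> x0; apply: (mulfI (lt0r_neq0 (nabs_gt0 x0))).
by rewrite -(nabsM habs) !mulfV ?nabs1 // gt_eqF ?nabs_gt0.
Qed.

Lemma nabsN1 : abs (-1) = 1.
Proof.
apply/eqP; rewrite -sqrp_eq1 ?(nabs_ge0 habs) //.
by rewrite expr2 -(nabsM habs) mulrNN mulr1 nabs1.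
Qed.

Lemma exists_nabs_in_01 : exists x : F, 0 < abs x < 1.
Proof.
have [x [x_ne0 x_ne1]] := nabs_nontrivial habs.
have x0 : x != 0 by apply: contra_notN x_ne0 => /eqP ->; rewrite nabs0.
have [x_lt1|x_ge1] := ltP (abs x) 1; first by exists x; rewrite nabs_gt0.
exists x^-1; rewrite nabs_gt0 ?invr_eq0 //= nabsV // invf_lt1 ?nabs_gt0 //.
by rewrite lt_neqAle eq_sym x_ge1 andbT; apply/eqP.
Qed.

Lemma exists_small_nabs (d : R) : 0 < d -> exists2 lam : F, lam != 0 & abs lam < d.
Proof.
move=> d0; have [x /andP[x_gt0 x_lt1]] := exists_nabs_in_01.
have [n xn_lt] := exists_expr_lt x_gt0 x_lt1 d0.
exists (x ^+ n); last by rewrite nabsX.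
by rewrite expf_neq0 //; apply: contraTneq x_gt0 => ->; rewrite nabs0 ltxx.
Qed.

Section Banach.
Variables (E : lmodType F) (norm : E -> R).
Hypothesis hban : is_banach abs norm.

Lemma bnorm0 : norm 0 = 0.
Proof. exact/(bnorm_eq0 hban). Qed.

Lemma bnormN (x : E) : norm (- x) = norm x.
Proof. by rewrite -scaleN1r (bnormZ hban) nabsN1 mul1r. Qed.

Lemma bnorm_ge0 (x : E) : 0 <= norm x.
Proof. by have := bnorm_ultra hban x (- x); rewrite subrr bnorm0 bnormN maxxx. Qed.

Lemma bnorm_le_of_approx (y : E) (rho : R) :
  (forall eps, 0 < eps -> exists2 z, norm z <= rho & norm (y - z) < eps) ->
  norm y <= rho.
Proof.
move=> approx; rewrite leNgt; apply/negP => rho_lt.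
have [z z_le yz_lt] : exists2 z, norm z <= rho & norm (y - z) < norm y - rho.
  by apply: approx; rewrite subr_gt0.
have z_ge0 := bnorm_ge0 z.
by have := bnorm_ultra hban z (y - z); rewrite addrC subrK le_max => /orP[]; lra.
Qed.

End Banach.
End NonArchimedeanAbs.

Lemma norm_bounded_uniform (R : realType) (I : Type) (E : I -> Type)
    (norm : forall i, E i -> R) (Bs : forall i, E i -> Prop) (J : seq I) :
  (forall i, norm_bounded (@norm i) (Bs i)) ->
  exists2 r, 0 < r & forall i, List.In i J -> forall y, Bs i y -> norm i y <= r.
Proof.
move=> Bs_bd; elim: J => [|j J [r r_gt0 r_bd]]; first by exists 1.
have [rj rj_bd] := Bs_bd j.
exists (Num.max r rj); first by rewrite lt_max r_gt0.
move=> i [<-|iJ] y By; rewrite le_max; apply/orP.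
  by right; apply: rj_bd.
by left; apply: r_bd.
Qed.

Section DirectSumBalls.
Variables (R : realType) (F : fieldType) (abs : F -> R).
Variables (I : Type) (E : I -> lmodType F) (norm : forall i, E i -> R).
Hypothesis habs : complete_nonarch_abs abs.
Hypothesis hban : forall i, is_banach abs (@norm i).

Definition dsum_ball (J : seq I) (r : R) (x : dsum E) : Prop :=
  forall i, (List.In i J -> @norm i (sval x i) <= r) /\ (~ List.In i J -> sval x i = 0).

Lemma dsum_ball_bounded J r : dsum_bounded norm (dsum_ball J r).
Proof. by exists J, (fun i y => @norm i y <= r); split => // i; exists r. Qed.

Lemma dsum_bounded_sub_ball B : dsum_bounded norm B ->
  exists J r, 0 < r /\ forall x, B x -> dsum_ball J r x.
Proof.
move=> [J [Bs [Bs_bd B_sub]]].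
have [r r_gt0 r_bd] := norm_bounded_uniform J Bs_bd.
exists J, r; split => // x Bx i; have [inJ offJ] := B_sub x Bx i.
by split => // iJ; apply: r_bd iJ _ (inJ iJ).
Qed.

Lemma dsum_ball_norm_le J r x i : 0 <= r -> dsum_ball J r x -> @norm i (sval x i) <= r.
Proof.
move=> r_ge0 /(_ i) [inJ offJ]; rewrite leNgt; apply/negP => r_lt.
have iNJ : ~ List.In i J by move=> /inJ; rewrite leNgt r_lt.
by move: r_lt; rewrite offJ // (bnorm0 (hban i)) ltNge r_ge0.
Qed.

Lemma dsum_conv0_component d : dsum_conv0 norm d ->
  forall i eps, 0 < eps -> exists N, forall n, (N <= n)%N -> @norm i (d n i) < eps.
Proof.
move=> [B [B_bd B_absorbs]] i eps eps_gt0.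
have [J [r [r_gt0 B_sub]]] := dsum_bounded_sub_ball B_bd.
have [lam lam0 lam_small] := exists_small_nabs habs (divr_gt0 eps_gt0 r_gt0).
have [N tail] := B_absorbs lam (elimN eqP lam0).
exists N => n /tail [b [Bb ->]]; rewrite (bnormZ (hban i)).
have b_le := dsum_ball_norm_le i (ltW r_gt0) (B_sub b Bb).
apply: le_lt_trans (ler_wpM2l (nabs_ge0 habs lam) b_le) _.
by rewrite -ltr_pdivlMr.
Qed.

Lemma dsum_ball_closed J r : dsum_closed norm (dsum_ball J r).
Proof.
move=> s s_ball [e e_lim]; exists e; split => // i.
have comp_lim := dsum_conv0_component e_lim i.
split => [iJ | iNJ].
  apply: (bnorm_le_of_approx habs (hban i)) => eps /comp_lim [N tail].
  by exists (sval (s N) i); [apply: (s_ball N i).1 | apply: tail].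
apply/(bnorm_eq0 (hban i))/le_anti; rewrite (bnorm_ge0 habs (hban i)) andbT.
apply: (bnorm_le_of_approx habs (hban i)) => eps /comp_lim [N tail].
exists 0; first by rewrite (bnorm0 (hban i)).
by have := tail N (leqnn N); rewrite ((s_ball N i).2 iNJ) !subr0.
Qed.

End DirectSumBalls.

Theorem lemma2p24 (R : realType) (F : fieldType) (abs : F -> R)
  (habs : complete_nonarch_abs abs)
  (I : Type) (E : I -> lmodType F) (norm : forall i, E i -> R)
  (hban : forall i, is_banach abs (@norm i)) :
  dsum_proper norm.
Proof.
exists (fun A => dsum_bounded norm A /\ dsum_closed norm A); split => // B B_bd.
have [J [r [_ B_sub]]] := dsum_bounded_sub_ball B_bd.
exists [:: dsum_ball norm J r]; split.
  move=> A [<- | []]; split; first exact: dsum_ball_bounded.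
  exact: dsum_ball_closed habs hban J r.
by move=> x Bx; exists (dsum_ball norm J r); split; [left | apply: B_sub].
Qed.
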